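(* Let $X$ and $Y$ be metrizable spaces that are locally compact and $\sigma$-compact, let $G$ be a group, and let $\varphi\colon G\times X\to X$ and $\psi\colon G\times Y\to Y$ be metric-independent expansive (MIE) actions. Then the coproduct action of $G$ on the disjoint union $X\sqcup Y$ (acting by $\varphi$ on $X$ and by $\psi$ on $Y$) is MIE.
   Context: For a metric $d$ on a space $Z$, an action of $G$ on $Z$ is expansive with respect to $d$ if there is $c>0$ such that for all $x\neq y$ in $Z$ there is $g\in G$ with $d(g\cdot x,g\cdot y)>c$. The action is metric-independent expansive (MIE) if it is expansive with respect to every metric compatible with the topology of $Z$. *)

From HB Require Import structures.
From mathcomp Require Import all_boot all_order all_algebra.
From mathcomp Require Import all_classical all_reals all_analysis.
Set Implicit Arguments. Unset Strict Implicit. Unset Printing Implicit Defensive.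
Import Order.TTheory GRing.Theory Num.Theory.
Local Open Scope classical_set_scope.
Local Open Scope ring_scope.

Definition is_group (G : Type) (mul : G -> G -> G) (one : G) (inv : G -> G) :=
  [/\ forall a b c, mul a (mul b c) = mul (mul a b) c,
      forall a, mul one a = a,
      forall a, mul a one = a,
      forall a, mul (inv a) a = one &
      forall a, mul a (inv a) = one].

Definition is_action (G T : Type) (mul : G -> G -> G) (one : G)
  (act : G -> T -> T) :=
  (forall x, act one x = x) /\
  (forall g h x, act (mul g h) x = act g (act h x)).

(* A continuous action on a topological space (action by homeomorphisms,
   G carrying the discrete topology). *)
Definition is_continuous_action (G : Type) (T : topologicalType)
  (mul : G -> G -> G) (one : G) (act : G -> T -> T) :=
  is_action mul one act /\ (forall g, continuous (act g)).

Definition is_metric (R : realType) (T : Type) (d : T -> T -> R) :=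
  [/\ forall x y, d x y = 0 <-> x = y,
      forall x y, d x y = d y x &
      forall x y z, d x z <= d x y + d y z].

Definition compatible_with (R : realType) (T : Type) (op : set T -> Prop)
  (d : T -> T -> R) :=
  forall U : set T,
    op U <-> (forall x, U x -> exists2 e : R, 0 < e & [set y | d x y < e] `<=` U).

Definition expansive_wrt (R : realType) (G T : Type) (act : G -> T -> T)
  (d : T -> T -> R) :=
  exists2 c : R, 0 < c &
    forall x y, x <> y -> exists g, c < d (act g x) (act g y).

Definition MIE_on (R : realType) (G T : Type) (op : set T -> Prop)
  (act : G -> T -> T) :=
  forall d : T -> T -> R, is_metric d -> compatible_with op d ->
    expansive_wrt act d.

Definition MIE (R : realType) (G : Type) (T : topologicalType)
  (act : G -> T -> T) := MIE_on R (@open T) act.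

Definition metrizable (R : realType) (T : topologicalType) :=
  exists d : T -> T -> R, is_metric d /\ compatible_with (@open T) d.

Definition sigma_compact (T : topologicalType) :=
  exists K : nat -> set T, (forall n, compact (K n)) /\ \bigcup_n K n = setT.

Definition sum_open (X Y : topologicalType) (U : set (X + Y)%type) : Prop :=
  open (inl @^-1` U) /\ open (inr @^-1` U).

Definition coprod_action (G : Type) (X Y : Type) (phi : G -> X -> X)
  (psi : G -> Y -> Y) (g : G) (z : X + Y) : X + Y :=
  match z with
  | inl x => inl (phi g x)
  | inr y => inr (psi g y)
  end.

From mathcomp Require Import all_boot all_order all_algebra.
From mathcomp Require Import all_classical all_reals all_analysis.
From mathcomp Require Import lra.
Set Implicit Arguments. Unset Strict Implicit. Unset Printing Implicit Defensive.
Import Order.TTheory GRing.Theory Num.Theory.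
Local Open Scope classical_set_scope.
Local Open Scope ring_scope.

(* The pairs of points of X and of Y are the only ones not handled directly by
   the MIE of the two summands.  Let f x > 0 be the d-distance from inl x to
   inr Y (positive since inl X is open).  Truncating the restriction of d to X
   to min (d x x') (f x + f x') gives another compatible metric on X, with an
   expansive constant c.  If the X- and Y-components of the orbits of (x1, y1)
   and of (x2, y2) stay within c/2 of each other, then f stays below c/2 along
   both X-orbits, so the truncated distance never exceeds c along the orbit of
   (x1, x2), and x1 = x2.  Hence at most one point x1 has an orbit shadowed by
   some Y-orbit within c/2, and min (c/2) (f x1 / 2) is a separation constant
   for the mixed pairs. *)

Lemma metric_ge0 (R : realType) (T : Type) (d : T -> T -> R) :
  is_metric d -> forall x y, 0 <= d x y.
Proof.
case=> d0 dC dtri x y.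
have := dtri x y x; rewrite (proj2 (d0 x x) erefl) (dC y x) -mulr2n.
by rewrite pmulrn_lge0.
Qed.

Lemma is_metric_injective (R : realType) (A T : Type) (i : A -> T)
  (d : T -> T -> R) :
  injective i -> is_metric d -> is_metric (fun a b => d (i a) (i b)).
Proof.
move=> i_inj [d0 dC dtri]; split=> // a b.
by rewrite d0; split=> [/i_inj|->].
Qed.

Lemma inl_inj (A B : Type) : injective (@inl A B).
Proof. by move=> a b []. Qed.

Lemma inr_inj (A B : Type) : injective (@inr A B).
Proof. by move=> a b []. Qed.

Lemma compatible_with_open_embedding (R : realType) (T : Type)
  (op : set T -> Prop) (A : topologicalType) (i : A -> T) (d : T -> T -> R) :
  injective i -> (forall U, open U -> op (i @` U)) ->
  (forall V, op V -> open (i @^-1` V)) -> op (range i) ->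
  compatible_with op d -> compatible_with (@open A) (fun a b => d (i a) (i b)).
Proof.
move=> i_inj i_open i_cont op_range dP U; split.
  move=> oU a Ua.
  have [e e0 ball_sub] :=
    proj1 (dP _) (i_open _ oU) (i a) (ex_intro2 _ _ a Ua erefl).
  exists e => // b /ball_sub [b' Ub' /i_inj <-] //.
move=> balls.
have -> : U = i @^-1` (i @` U).
  by apply/seteqP; split=> [a Ua|a [b Ub /i_inj <-//]]; exists a.
apply/i_cont/dP => _ [a Ua <-].
have [e1 e10 ball1] := balls a Ua.
have [e2 e20 ball2] := proj1 (dP _) op_range (i a) (ex_intro2 _ _ a I erefl).
exists (Num.min e1 e2); first by rewrite lt_min e10 e20.
move=> w /=; rewrite lt_min => /andP[w1 /ball2 [b _ wb]].
by subst w; exists b => //; apply: ball1.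
Qed.

Section TruncatedMetric.
Variables (R : realType) (A : Type) (dA : A -> A -> R) (f : A -> R).
Hypothesis dA_metric : is_metric dA.
Hypothesis f_gt0 : forall x, 0 < f x.
Hypothesis f_lip : forall x y, f x <= f y + dA x y.

Definition truncated_metric x y := Num.min (dA x y) (f x + f y).

Lemma truncated_metric_le x y : truncated_metric x y <= f x + f y.
Proof. by rewrite ge_min lexx orbT. Qed.

Lemma is_metric_truncated : is_metric truncated_metric.
Proof.
have dA_ge0 := metric_ge0 dA_metric.
case: dA_metric => d0 dC dtri; rewrite /truncated_metric; split.
- move=> x y; split; last first.
    by move=> <-; rewrite (proj2 (d0 x x) erefl) min_l // addr_ge0 ?ltW.
  case: (leP (dA x y) (f x + f y)) => [_ /d0 //|_ sum0].
  by exfalso; have := f_gt0 x; have := f_gt0 y; lra.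
- by move=> x y; rewrite dC addrC.
- move=> x y z.
  have := dtri x y z; have := f_lip x y; have := f_lip z y; rewrite (dC z y).
  have := f_gt0 y; have := dA_ge0 x z.
  have := ge_min (dA x z) (dA x z) (f x + f z); rewrite lexx /= => xz1.
  have := ge_min (f x + f z) (dA x z) (f x + f z); rewrite lexx orbT => xz2.
  by case: (leP (dA x y) (f x + f y)); case: (leP (dA y z) (f y + f z)); lra.
Qed.

(* Small truncated balls are dA-balls: below radius f x they coincide. *)
Lemma compatible_with_truncated (op : set A -> Prop) :
  compatible_with op dA -> compatible_with op truncated_metric.
Proof.
move=> dP U; rewrite dP /truncated_metric; split=> balls x Ux;
  have [e e0 ball_sub] := balls x Ux.
  exists (Num.min e (f x)); first by rewrite lt_min e0 f_gt0.
  move=> y /=; rewrite lt_min => /andP[ye yf]; apply: ball_sub => /=.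
  by move: ye yf; have := f_gt0 y; case: (leP (dA x y) (f x + f y)); lra.
exists e => // y /= ye; apply: ball_sub => /=.
by apply: le_lt_trans ye; rewrite ge_min lexx.
Qed.

End TruncatedMetric.

Section SumMetric.
Variables (R : realType) (X Y : topologicalType).
Variable d : (X + Y)%type -> (X + Y)%type -> R.
Hypothesis d_metric : is_metric d.
Hypothesis dP : compatible_with (@sum_open X Y) d.

Lemma preimage_inl_image_inl (U : set X) : @inl X Y @^-1` (inl @` U) = U.
Proof. by apply/seteqP; split=> [a [b Ub [<-]] //|a Ua]; exists a. Qed.

Lemma preimage_inr_image_inl (U : set X) : @inr X Y @^-1` (inl @` U) = set0.
Proof. by apply/seteqP; split=> // a []. Qed.

Lemma preimage_inl_image_inr (U : set Y) : @inl X Y @^-1` (inr @` U) = set0.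
Proof. by apply/seteqP; split=> // a []. Qed.

Lemma preimage_inr_image_inr (U : set Y) : @inr X Y @^-1` (inr @` U) = U.
Proof. by apply/seteqP; split=> [a [b Ub [<-]] //|a Ua]; exists a. Qed.

Lemma sum_open_image_inl (U : set X) : open U -> sum_open (@inl X Y @` U).
Proof.
move=> oU; split; rewrite ?preimage_inl_image_inl ?preimage_inr_image_inl //.
exact: open0.
Qed.

Lemma sum_open_image_inr (U : set Y) : open U -> sum_open (@inr X Y @` U).
Proof.
move=> oU; split; rewrite ?preimage_inl_image_inr ?preimage_inr_image_inr //.
exact: open0.
Qed.

Lemma is_metric_inl : is_metric (fun a b => d (inl a) (inl b)).
Proof. exact: is_metric_injective (@inl_inj X Y) d_metric. Qed.

Lemma is_metric_inr : is_metric (fun a b => d (inr a) (inr b)).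
Proof. exact: is_metric_injective (@inr_inj X Y) d_metric. Qed.

Lemma compatible_with_inl :
  compatible_with (@open X) (fun a b => d (inl a) (inl b)).
Proof.
apply: compatible_with_open_embedding dP => [||V [] //|].
- exact: inl_inj.
- exact: sum_open_image_inl.
- exact/sum_open_image_inl/openT.
Qed.

Lemma compatible_with_inr :
  compatible_with (@open Y) (fun a b => d (inr a) (inr b)).
Proof.
apply: compatible_with_open_embedding dP => [||V [] //|].
- exact: inr_inj.
- exact: sum_open_image_inr.
- exact/sum_open_image_inr/openT.
Qed.

Definition dist_to_inr (x : X) := inf (range (fun y => d (inl x) (inr y))).

Lemma dist_to_inr_le x y : dist_to_inr x <= d (inl x) (inr y).
Proof.
apply: ge_inf; last by exists y.
by exists 0 => _ [y' _ <-]; apply: metric_ge0.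
Qed.

Section NonemptyY.
Variable y0 : Y.

Lemma dist_to_inr_gt0 x : 0 < dist_to_inr x.
Proof.
have [e e0 ball_sub] :=
  proj1 (dP _) (sum_open_image_inl openT) (inl x) (ex_intro2 _ _ x I erefl).
apply: lt_le_trans e0 _; apply: lb_le_inf; first by exists (d (inl x) (inr y0)), y0.
by move=> _ [y _ <-]; rewrite leNgt; apply/negP => /ball_sub [].
Qed.

Lemma dist_to_inr_lipschitz x x' :
  dist_to_inr x <= dist_to_inr x' + d (inl x) (inl x').
Proof.
rewrite -lerBlDr; apply: lb_le_inf; first by exists (d (inl x') (inr y0)), y0.
move=> _ [y _ <-]; rewrite lerBlDr; apply: le_trans (dist_to_inr_le x y) _.
by case: d_metric => _ dC dtri; rewrite addrC dtri.
Qed.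

End NonemptyY.

Section Orbits.
Variables (G : Type) (one : G) (phi : G -> X -> X) (psi : G -> Y -> Y).
Hypothesis phi_one : forall x, phi one x = x.

Definition shadowed (c : R) x y :=
  forall g, d (inl (phi g x)) (inr (psi g y)) <= c.

Lemma not_shadowed c x y :
  ~ shadowed c x y -> exists g, c < d (inl (phi g x)) (inr (psi g y)).
Proof. by move=> /existsNP [g /negP]; rewrite -ltNge; exists g. Qed.

Lemma shadowed_dist_to_inr c x y : shadowed c x y -> dist_to_inr x <= c.
Proof. by move/(_ one); rewrite phi_one; apply: le_trans (dist_to_inr_le _ _). Qed.

Lemma shadowed_unique (c : R) x1 y1 x2 y2 :
  (forall x x', x <> x' -> exists g,
     c < truncated_metric (fun a b => d (inl a) (inl b)) dist_to_inr
           (phi g x) (phi g x')) ->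
  shadowed (c / 2) x1 y1 -> shadowed (c / 2) x2 y2 -> x1 = x2.
Proof.
move=> expand sh1 sh2; apply: contrapT => /expand [g].
apply/negP; rewrite -leNgt; apply: le_trans (truncated_metric_le _ _ _ _) _.
have := le_trans (dist_to_inr_le _ _) (sh1 g).
have := le_trans (dist_to_inr_le _ _) (sh2 g); lra.
Qed.

Hypothesis phi_MIE : MIE R phi.

Lemma expansive_inl_inr : exists2 c : R, 0 < c &
  forall x y, exists g, c < d (inl (phi g x)) (inr (psi g y)).
Proof.
have [[y0 _]|Y0] := pselect (exists y : Y, True); last first.
  by exists 1 => // x y; exfalso; apply: Y0; exists y.
have [c c0 expand] := phi_MIE
  (is_metric_truncated is_metric_inl (dist_to_inr_gt0 y0) (dist_to_inr_lipschitz y0))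
  (compatible_with_truncated (dist_to_inr_gt0 y0) compatible_with_inl).
have [[x1 [y1 sh1]]|no_sh] := pselect (exists x1 y1, shadowed (c / 2) x1 y1).
  have fx1 := dist_to_inr_gt0 y0 x1.
  exists (Num.min (c / 2) (dist_to_inr x1 / 2)); first by rewrite lt_min !divr_gt0.
  move=> x y; apply: not_shadowed => sh.
  have sh' : shadowed (c / 2) x y.
    by move=> g; apply: le_trans (sh g) _; rewrite ge_min lexx.
  have x1x := shadowed_unique expand sh1 sh'; subst x.
  have := shadowed_dist_to_inr sh; rewrite le_min => /andP[_]; lra.
exists (c / 2); first by rewrite divr_gt0.
by move=> x y; apply: not_shadowed => sh; apply: no_sh; exists x, y.
Qed.

End Orbits.

End SumMetric.

Theorem mainTheorem7 (R : realType) (X Y : topologicalType)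
  (G : Type) (mul : G -> G -> G) (one : G) (inv : G -> G)
  (phi : G -> X -> X) (psi : G -> Y -> Y) :
  is_group mul one inv ->
  metrizable R X -> locally_compact [set: X] -> sigma_compact X ->
  metrizable R Y -> locally_compact [set: Y] -> sigma_compact Y ->
  is_continuous_action mul one phi -> is_continuous_action mul one psi ->
  MIE R phi -> MIE R psi ->
  MIE_on R (@sum_open X Y) (coprod_action phi psi).
Proof.
move=> _ _ _ _ _ _ _ [[phi_one _] _] _ phi_MIE psi_MIE d d_metric dP.
have [cX cX0 expX] := phi_MIE _ (is_metric_inl d_metric) (compatible_with_inl dP).
have [cY cY0 expY] := psi_MIE _ (is_metric_inr d_metric) (compatible_with_inr dP).
have [cXY cXY0 expXY] := expansive_inl_inr d_metric dP psi phi_one phi_MIE.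
have [_ dC _] := d_metric.
exists (Num.min cX (Num.min cY cXY)); first by rewrite !lt_min cX0 cY0 cXY0.
have le_cX : Num.min cX (Num.min cY cXY) <= cX by rewrite ge_min lexx.
have le_cY : Num.min cX (Num.min cY cXY) <= cY by rewrite !ge_min lexx orbT.
have le_cXY : Num.min cX (Num.min cY cXY) <= cXY by rewrite !ge_min lexx !orbT.
case=> [a|a] [b|b] ab.
- have [g] := expX a b (fun e => ab (congr1 inl e)).
  by exists g; apply: le_lt_trans le_cX _.
- by have [g] := expXY a b; exists g; apply: le_lt_trans le_cXY _.
- by have [g] := expXY b a; exists g; rewrite /= dC; apply: le_lt_trans le_cXY _.
- have [g] := expY a b (fun e => ab (congr1 inr e)).
  by exists g; apply: le_lt_trans le_cY _.
Qed.
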